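(* Let $p$ be a prime and let $G$ be a finite $p$-group. Then the number of maximal abelian subgroups of $G$ is congruent to $1$ modulo $p$.
   Context: A subgroup $A$ of a group $G$ is called maximal abelian if $A$ is abelian and is not properly contained in any abelian subgroup of $G$, i.e. $A$ is maximal with respect to inclusion among the abelian subgroups of $G$. (Such subgroups need not be maximal subgroups of $G$ and may have different orders.) *)

From mathcomp Require Import all_boot all_fingroup all_solvable.
Set Implicit Arguments. Unset Strict Implicit. Unset Printing Implicit Defensive.

Definition maxAbelian (gT : finGroupType) (G : {set gT}) : {set {group gT}} :=
  [set A : {group gT} | [max A | (A \subset G) && abelian A]%g].

From mathcomp Require Import all_boot all_fingroup all_solvable.
Set Implicit Arguments. Unset Strict Implicit.
Local Open Scope group_scope.

(* Induction on |G|, the abelian case being trivial.  A maximal abelian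
   subgroup A of G is self-centralizing, 'C_G(A) = A, so it contains
   Z = 'Z(G), properly when G is not abelian.  Count the pairs (x, A) with
   x in G / Z, A maximal abelian and x in A / Z.  Grouped by A, the count is
   a sum of the orders |A / Z|, all divisible by p.  Grouped by x, x = 1
   contributes the number of maximal abelian subgroups, while for x = gZ
   nontrivial the maximal abelian subgroups containing g are exactly those
   of the proper subgroup 'C_G[g], so by induction each such x contributes
   1 mod p.  As p also divides |G / Z|, the count is thus congruent to the
   number of maximal abelian subgroups minus 1, and to 0. *)

Lemma sum_card_rel (I J : finType) (X : {set I}) (Y : {set J}) (R : I -> J -> bool) :
  \sum_(x in X) #|[set y in Y | R x y]| = \sum_(y in Y) #|[set x in X | R x y]|.
Proof.
under eq_bigr do rewrite -sum1dep_card.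
under [RHS]eq_bigr do rewrite -sum1dep_card.
rewrite (exchange_big_dep (fun y => y \in Y)) => [|x y _ /andP[] //].
by apply: eq_bigr => y Yy; apply: eq_bigl => x; rewrite Yy.
Qed.

Section Quotients.
Variable gT : finGroupType.
Implicit Types H K : {group gT}.

Lemma mem_quotient_repr H K (x : coset_of K) :
  K <| H -> (x \in H / K) = (repr x \in H).
Proof.
move=> nKH; rewrite -{2}(quotientGK nKH) -{1}(coset_reprK x).
by apply/idP/morphpreP => [|[]] //; split; first exact: repr_coset_norm.
Qed.

Lemma dvdn_card_quotient (p : nat) H K :
  p.-group H -> H \subset 'N(K) -> ~~ (H \subset K) -> p %| #|H / K|.
Proof.
move=> pH nKH sHK; have [] // := pgroup_pdiv (quotient_pgroup K pH).
by rewrite -subG1 quotient_sub1.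
Qed.

End Quotients.

Section MaxAbelian.
Variable gT : finGroupType.
Implicit Types (G H A B : {group gT}) (g : gT).

Lemma maxAbelianE G A : (A \in maxAbelian G) = ('C_G(A) == A).
Proof.
rewrite inE; apply/maxgroupP/eqP => [[/andP[sAG abA] maxA] | defA].
  apply/eqP; rewrite eqEsubset subsetI sAG; apply/and3P; split=> //.
  apply/subsetP => x /setIP[Gx cAx].
  have sAxG: A <*> <[x]> \subset G by rewrite join_subG sAG cycle_subG.
  have abAx: abelian (A <*> <[x]>).
    by rewrite abelianY abA cycle_abelian cycle_subG.
  rewrite -(maxA _ (introT andP (conj sAxG abAx)) (joing_subl _ _)).
  exact: subsetP (joing_subr _ _) _ (cycle_id x).
have sAG: A \subset G by rewrite -defA subsetIl.
have abA: abelian A by rewrite /abelian -{1}defA subsetIr.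
split=> [|B /andP[sBG abB] sAB]; first by rewrite sAG.
apply/eqP; rewrite eqEsubset sAB andbT -defA subsetI sBG.
exact: subset_trans abB (centS sAB).
Qed.

Lemma maxAbelian_sub G A : A \in maxAbelian G -> A \subset G.
Proof. by rewrite maxAbelianE => /eqP <-; rewrite subsetIl. Qed.

Lemma center_sub_maxAbelian G A : A \in maxAbelian G -> 'Z(G) \subset A.
Proof.
rewrite maxAbelianE => /eqP defA; rewrite -defA setIS // centS //.
by rewrite -defA subsetIl.
Qed.

Lemma abelian_maxAbelian G : abelian G -> maxAbelian G = [set G].
Proof.
move=> abG; apply/setP => A; rewrite maxAbelianE inE.
apply/eqP/eqP => [defA | ->]; last exact/setIidPl.
have sAG: A \subset G by rewrite -defA subsetIl.
by apply: val_inj; rewrite /= -defA; apply/setIidPl/(subset_trans abG (centS sAG)).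
Qed.

Lemma maxAbelian_cent1 G g : g \in G ->
  [set A in maxAbelian G | g \in A] = maxAbelian 'C_G[g].
Proof.
move=> Gg; apply/setP => A; rewrite inE !maxAbelianE.
apply/andP/eqP => [[/eqP defA gA] | defA].
  have cAg: g \in 'C(A) by rewrite -defA in gA; case/setIP: gA.
  by rewrite -setIA (setIC 'C[g]) setIA defA; apply/setIidPl; rewrite sub_cent1.
have sAC: A \subset 'C_G[g] by rewrite -defA subsetIl.
have gA: g \in A.
  rewrite -defA; apply/setIP; split; first by rewrite inE Gg cent1id.
  by rewrite -sub_cent1 (subset_trans sAC) ?subsetIr.
have cAC: 'C(A) \subset 'C[g] by rewrite -cent_set1 centS ?sub1set.
by split=> //; apply/eqP; rewrite -{2}defA -setIA (setIidPr cAC).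
Qed.

Lemma center_proper_maxAbelian G A :
  ~~ abelian G -> A \in maxAbelian G -> 'Z(G) \proper A.
Proof.
move=> nabG maxA; rewrite properE center_sub_maxAbelian //=.
apply: contra nabG => sAZ.
have cGA: G \subset 'C(A) by rewrite centsC (subset_trans sAZ) ?subsetIr.
move: maxA; rewrite maxAbelianE (setIidPl cGA) => /eqP ->.
exact: abelianS sAZ (center_abelian G).
Qed.

Lemma center_normal_maxAbelian G A : A \in maxAbelian G -> 'Z(G) <| A.
Proof.
move=> maxA.
exact: normalS (center_sub_maxAbelian maxA) (maxAbelian_sub maxA) (center_normal G).
Qed.

End MaxAbelian.

Section InductionStep.
Variables (gT : finGroupType) (p : nat) (G : {group gT}).
Hypotheses (pG : p.-group G) (nabG : ~~ abelian G).
Hypothesis IHG : forall H : {group gT}, H \proper G -> #|maxAbelian H| = 1 %[mod p].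

Local Notation Z := 'Z(G).
Let nZG : G \subset 'N(Z) := normal_norm (center_normal G).

Lemma dvdn_card_maxAbelian_quotient A : A \in maxAbelian G -> p %| #|A / Z|.
Proof.
move=> maxA; have sAG := maxAbelian_sub maxA.
apply: dvdn_card_quotient (pgroupS sAG pG) (subset_trans sAG nZG) _.
exact: proper_subn (center_proper_maxAbelian nabG maxA).
Qed.

Lemma dvdn_card_center_quotient : p %| #|G / Z|.
Proof.
apply: dvdn_card_quotient pG nZG _; apply: contra nabG => sGZ.
exact: abelianS sGZ (center_abelian G).
Qed.

Lemma card_maxAbelian_quotient_mem x : x \in (G / Z)^# ->
  #|[set A in maxAbelian G | x \in A / Z]| = 1 %[mod p].
Proof.
case/setD1P=> ntx Gx; set g := repr x.
have Gg: g \in G by rewrite -mem_quotient_repr ?center_normal.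
have Zg: g \notin Z by apply: contra ntx => Zg; rewrite -(coset_reprK x) coset_id.
have ->: [set A in maxAbelian G | x \in A / Z] = [set A in maxAbelian G | g \in A].
  apply: eq_finset => A; apply: andb_id2l => maxA.
  by rewrite mem_quotient_repr ?center_normal_maxAbelian.
rewrite maxAbelian_cent1 // IHG // properE subsetIl /=.
by apply: contra Zg => sGC; rewrite inE Gg -sub_cent1 (subset_trans sGC) ?subsetIr.
Qed.

Lemma card_maxAbelian_step : #|maxAbelian G| = 1 %[mod p].
Proof.
set S := maxAbelian G; set X := (G / Z)^#.
have count := sum_card_rel (G / Z) S (fun x (A : {group gT}) => x \in A / Z).
have card_quotient_maxAbelian A :
    A \in S -> #|[set x in G / Z | x \in A / Z]| = #|A / Z|.
  move=> maxA; apply: eq_card => x; rewrite inE andb_idl //.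
  exact: subsetP (quotientS Z (maxAbelian_sub maxA)) x.
rewrite (eq_bigr _ card_quotient_maxAbelian) (big_setD1 1) ?group1 //= in count.
have card_S : #|[set A in S | 1 \in A / Z]| = #|S|.
  by apply: eq_card => A; rewrite inE group1 andbT.
have sum_X : \sum_(x in X) #|[set A in S | x \in A / Z]| = #|X| %[mod p].
  by rewrite -modn_summ (eq_bigr _ card_maxAbelian_quotient_mem) modn_summ sum1_card.
have S_X : #|S| + #|X| = 0 %[mod p].
  rewrite -modnDmr -sum_X modnDmr -card_S count mod0n; apply/eqP.
  exact: dvdn_sum dvdn_card_maxAbelian_quotient.
have one_X : 1 + #|X| = 0 %[mod p].
  rewrite mod0n; apply/eqP.
  by have := dvdn_card_center_quotient; rewrite (cardsD1 1) group1.
by apply/eqP; rewrite -(eqn_modDr #|X|) S_X one_X.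
Qed.

End InductionStep.

Lemma card_maxAbelian_pgroup (gT : finGroupType) (p : nat) (G : {group gT}) :
  p.-group G -> #|maxAbelian G| = 1 %[mod p].
Proof.
elim: {G}_.+1 {-2}G (ltnSn #|G|) => // n IHn G leGn pG.
have [abG | nabG] := boolP (abelian G); first by rewrite abelian_maxAbelian // cards1.
apply: (card_maxAbelian_step pG nabG) => H /[dup] /proper_card ltHG /proper_sub sHG.
exact: IHn (leq_trans ltHG leGn) (pgroupS sHG pG).
Qed.

Theorem mainTheorem1 (gT : finGroupType) (p : nat) (G : {group gT}) :
  prime p -> (p.-group G)%g -> #|maxAbelian G| = 1 %[mod p].
Proof.
by move=> _; exact: card_maxAbelian_pgroup.
Qed.
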